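(* Let $\alpha_1,\alpha_2$ be real singular $1$-cocycles on $X$ both representing $a$, and let $\beta$ be a singular $0$-cochain on $X$ (viewed as a real-valued function on $X$) with $\alpha_1-\alpha_2=d\beta$. Let $g\in G_a$ be covered by $\widehat g\in\widehat G_a$. (1) Let $x\in X$ and assume $\widehat{\mathrm{rot}}_{x,\alpha_1}(\widehat g)$ and $\widehat{\mathrm{rot}}_{x,\alpha_2}(\widehat g)$ are defined. If $\beta$ is bounded on the orbit $\{g^i(x)\}_{i\in\mathbb{N}}$, then $\widehat{\mathrm{rot}}_{x,\alpha_1}(\widehat g)=\widehat{\mathrm{rot}}_{x,\alpha_2}(\widehat g)$. (2) Let $\mu$ be a $g$-invariant Borel probability measure on $X$ and assume $\widehat{\mathrm{rot}}_{\mu,\alpha_1}(\widehat g)$ and $\widehat{\mathrm{rot}}_{\mu,\alpha_2}(\widehat g)$ are defined. If $\int_X(\beta(g(x))-\beta(x))\,d\mu(x)=0$, then $\widehat{\mathrm{rot}}_{\mu,\alpha_1}(\widehat g)=\widehat{\mathrm{rot}}_{\mu,\alpha_2}(\widehat g)$.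
   Context: $A$ is $\mathbb{Z}$ or the discrete group $\mathbb{R}$. $X$ is a path-connected space, $a\in\mathrm{H}^1(X;A)$, $\pi\colon\widehat X_a\to X$ a principal $A$-bundle with holonomy $a$, $T_r$ the action of $r\in A$. $\widehat G_a$ is the group of bundle automorphisms of $\widehat X_a$ (homeomorphisms $\widehat g$ with $\pi\circ\widehat g=g\circ\pi$ for a homeomorphism $g$ of $X$, said to cover $g$), and $G_a$ the group of homeomorphisms of $X$ preserving $a$. For a real singular $1$-cocycle $\alpha$ representing $a$, let $\theta\colon\widehat X_a\to\mathbb{R}$ be a $0$-cochain with $d\theta=\pi^*\alpha$ and $\theta(T_r\widehat y)=\theta(\widehat y)+r$; for $x\in X$, $\rho_{x,\alpha}(\widehat g)=\theta(\widehat g(\widehat x))-\theta(\widehat x)$ with $\widehat x\in\pi^{-1}(x)$ (independent of choices); $\widehat{\mathrm{rot}}_{x,\alpha}(\widehat g)=\lim_{n\to\infty}\rho_{x,\alpha}(\widehat g^n)/n$ when it exists; for a $g$-invariant Borel probability measure $\mu$, $\widehat{\mathrm{rot}}_{\mu,\alpha}(\widehat g)=\int_X\rho_{x,\alpha}(\widehat g)\,d\mu(x)$ when it exists. *)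

From HB Require Import structures.
From mathcomp Require Import all_boot all_order all_algebra.
From mathcomp Require Import all_classical all_reals all_analysis.
Set Implicit Arguments. Unset Strict Implicit. Unset Printing Implicit Defensive.
Import Order.TTheory GRing.Theory Num.Theory.
Import numFieldNormedType.Exports.
Local Open Scope classical_set_scope.
Local Open Scope ring_scope.

Section Simplices.
Variable R : realType.

Definition D1set : set R := `[0, 1]%classic.
Definition D2set : set (R * R) :=
  [set p | 0 <= p.1 /\ 0 <= p.2 /\ p.1 + p.2 <= 1].
Local Notation Delta1 := (set_type D1set).
Local Notation Delta2 := (set_type D2set).

Lemma D1_0 : D1set 0. Proof. by rewrite /D1set /= in_itv /= lexx ler01. Qed.
Lemma D1_1 : D1set 1. Proof. by rewrite /D1set /= in_itv /= lexx ler01. Qed.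
Lemma D2_0 : D2set (0, 0). Proof. by rewrite /D2set /= lexx addr0 ler01. Qed.

Definition d1zero : Delta1 := exist _ 0 (mem_set D1_0).
Definition d1one : Delta1 := exist _ 1 (mem_set D1_1).
Definition d2zero : Delta2 := exist _ (0, 0) (mem_set D2_0).

(** total "inclusion" of a point of R*R into Delta2 (only used on points
    that do lie in the simplex) *)
Definition toD2 (p : R * R) : Delta2 :=
  match pselect (D2set p) with
  | left h => exist _ p (mem_set h)
  | right _ => d2zero
  end.

(** The three faces Delta1 -> Delta2 (vertices e0=(0,0), e1=(1,0), e2=(0,1));
    face i omits vertex i and is the affine map preserving vertex order. *)
Definition face0 (u : Delta1) : Delta2 := toD2 (1 - set_val u, set_val u).
Definition face1 (u : Delta1) : Delta2 := toD2 (0, set_val u).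
Definition face2 (u : Delta1) : Delta2 := toD2 (set_val u, 0).
End Simplices.

Notation Delta1 R := (set_type (@D1set R)).
Notation Delta2 R := (set_type (@D2set R)).

Section Cochains.
Variables (R : realType) (X : topologicalType).

(** Singular 1-cochains: real functions on singular 1-simplices
    (continuous maps Delta1 -> X); values on non-continuous maps are junk
    and never used.  Singular 0-cochains are functions X -> R. *)
Definition cochain1 := (Delta1 R -> X) -> R.

Definition d0 (b : X -> R) (s : Delta1 R -> X) : R :=
  b (s (d1one R)) - b (s (d1zero R)).

Definition d1 (c : cochain1) (s : Delta2 R -> X) : R :=
  c (s \o face0 (R:=R)) - c (s \o face1 (R:=R)) + c (s \o face2 (R:=R)).

Definition is_cocycle1 (c : cochain1) : Prop :=
  forall s : Delta2 R -> X, continuous s -> d1 c s = 0.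


Definition cochain1_eq (c c' : cochain1) : Prop :=
  forall s : Delta1 R -> X, continuous s -> c s = c' s.

Definition path_connected : Prop :=
  forall x y : X, exists s : Delta1 R -> X,
    [/\ continuous s, s (d1zero R) = x & s (d1one R) = y].

Definition homeomorphism (f : X -> X) : Prop :=
  continuous f /\ exists h : X -> X, [/\ continuous h, cancel f h & cancel h f].
End Cochains.

(** [A : set R] is the coefficient group, Z (as the integers inside R) or the
    discrete group R.  A principal A-bundle (A discrete) pi : Xh -> X with
    action T r (r in A). *)
Definition principal_bundle (R : realType) (A : set R) (X Xh : topologicalType)
  (pi : Xh -> X) (T : R -> Xh -> Xh) : Prop :=
  [/\ continuous pi /\ (forall x, exists y, pi y = x),
      (forall r, A r -> continuous (T r)) /\
      (forall y, T 0 y = y) /\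
      (forall r s y, A r -> A s -> T (r + s) y = T r (T s y)) /\
      (forall r y, A r -> pi (T r y) = pi y),
      (forall y z, pi y = pi z -> exists r, A r /\ z = T r y) /\
      (forall r y, A r -> T r y = y -> r = 0) &
      (* local triviality: pi^-1(U) -> U x A, y |-> (pi y, phi y) is an
         A-equivariant homeomorphism, A discrete *)
      (forall x, exists U : set X, [/\ open U, U x &
        exists phi : Xh -> R,
        [/\ (forall y, U (pi y) -> A (phi y)),
            (forall r y, A r -> U (pi y) -> phi (T r y) = phi y + r),
            (forall y, U (pi y) -> \forall z \near y, phi z = phi y) &
            (forall r, A r -> forall V : set Xh, open V ->
               open (pi @` (V `&` [set y | U (pi y) /\ phi y = r])))]])].

Definition theta_for (R : realType) (A : set R) (X Xh : topologicalType)
  (pi : Xh -> X) (T : R -> Xh -> Xh) (alpha : cochain1 R X) (theta : Xh -> R)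
  : Prop :=
  (forall s : Delta1 R -> Xh, continuous s -> d0 theta s = alpha (pi \o s)) /\
  (forall r y, A r -> theta (T r y) = theta y + r).

(** rho_{x,alpha}(gh) = theta (gh xh) - theta xh, xh a lift of x *)
Definition rho (R : realType) (Xh : Type) (theta : Xh -> R) (gh : Xh -> Xh)
  (xh : Xh) : R := theta (gh xh) - theta xh.

Notation borel X := (g_sigma_algebraType (@open X)).

From mathcomp Require Import all_boot all_order all_algebra.
From mathcomp Require Import all_classical all_reals all_analysis.
From mathcomp Require Import lra.
Import Order.TTheory GRing.Theory Num.Theory.
Import numFieldNormedType.Exports.
Local Open Scope classical_set_scope.
Local Open Scope ring_scope.

(** The function [theta1 - theta2 - beta \o pi] on the total space is killed
    by the coboundary (as [d theta_i = pi^* alpha_i] and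
    [alpha1 - alpha2 = d beta]) and is invariant under the deck action, so it
    descends to [X].  There it is locally constant along every path, since a
    short piece of path lifts through a local section of the bundle; as [X] is
    path-connected it is constant.  Hence, for every map [k] of the total space,
    [rho theta1 k y - rho theta2 k y = beta (pi (k y)) - beta (pi y)].  For the
    iterates of [gh] this is [beta (g^n x) - beta x = o(n)] when [beta] is
    bounded on the orbit; for [k = gh] its integral is that of
    [beta \o g - beta], which vanishes. *)

Lemma locally_constant_connected {S : topologicalType} {V : Type} {h : S -> V} :
  connected [set: S] -> (forall s0, \forall s \near s0, h s = h s0) ->
  forall s t, h s = h t.
Proof.
move=> connS loc s t.
have open_level (P : V -> Prop) : open [set u | P (h u)].
  by rewrite openE => u /= Pu; apply: filterS (loc u) => v /= ->.
suff level_s : [set u | h u = h s] = [set: S].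
  by have : [set: S] t by []; rewrite -level_s.
apply: connS; first by exists s.
- by exists [set u | h u = h s]; [exact: (open_level (eq^~ (h s))) | rewrite setTI].
- exists [set u | h u = h s]; last by rewrite setTI.
  rewrite -[X in closed X]setCK; apply: open_closedC.
  exact: (open_level (fun v => v <> h s)).
Qed.

Lemma bounded_divn_cvg0 (R : archiRealFieldType) (b : nat -> R) :
  (exists M, forall n, `|b n| <= M) -> (fun n => b n / n%:R) @ \oo --> 0.
Proof.
move=> [M bM].
have inv_n0 : (fun n : nat => (n%:R : R)^-1) @ \oo --> 0.
  by rewrite -cvg_shiftS; exact: cvg_harmonic.
apply: (@squeeze_cvgr _ _ _ _ (fun n => - M * n%:R^-1) (fun n => M * n%:R^-1)).
- apply: nearW => n; rewrite mulNr -ler_norml normrM normfV normr_nat.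
  by apply: ler_wpM2r; [rewrite invr_ge0 ler0n | exact: bM].
- by rewrite -(mulr0 (- M)); exact: cvgMl_tmp.
- by rewrite -(mulr0 M); exact: cvgMl_tmp.
Qed.

Section UnitIntervalRetraction.
Variable R : realType.

Definition clamp01 (x : R) : R := Num.min (Num.max x 0) 1.

Lemma clamp01_D1 x : D1set (clamp01 x).
Proof.
rewrite /D1set /clamp01 /= in_itv /=; apply/andP; split.
  by rewrite le_min ler01 le_max lexx orbT.
by rewrite ge_min lexx orbT.
Qed.

Definition toD1 (x : R) : Delta1 R := exist _ (clamp01 x) (mem_set (clamp01_D1 x)).

Lemma continuous_toD1 : continuous toD1.
Proof.
apply: (@continuous_comp_initial _ _ _ (@set_val _ (@D1set R))) => x.
apply: (@continuous_min R R (fun x => Num.max x 0) (fun _ => 1)); last exact: cvg_cst.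
by apply: (@continuous_max R R id (fun _ => 0)); [exact: cvg_id | exact: cvg_cst].
Qed.

Lemma toD1_id (u : Delta1 R) : toD1 (set_val u) = u.
Proof.
apply: val_inj; case: u => x xD1 /=.
have /andP[x0 x1] : (0 <= x <= 1) by move: xD1 => /set_mem; rewrite /D1set /= in_itv.
by rewrite /clamp01 (max_idPl x0) (min_idPl x1).
Qed.

Lemma toD1_0 : toD1 0 = d1zero R. Proof. exact: (toD1_id (d1zero R)). Qed.
Lemma toD1_1 : toD1 1 = d1one R. Proof. exact: (toD1_id (d1one R)). Qed.

End UnitIntervalRetraction.

Section PrincipalBundle.
Context {R : realType} {A : set R} {X Xh : topologicalType}.
Context { pi : Xh -> X } {T : R -> Xh -> Xh}.
Hypothesis HA : A = range (fun z : int => z%:~R) \/ A = setT.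
Hypothesis Hbun : principal_bundle A pi T.

Lemma A0 : A 0.
Proof. by case: HA => ->; [exists 0%R|]. Qed.

Lemma AN r : A r -> A (- r).
Proof. by case: HA => -> //; case=> z _ <-; exists (- z)%R => //; rewrite mulrNz. Qed.

(* The section picks the point of the slice [phi = 0] of a local trivialisation. *)
Lemma local_section (x : X) : exists U : set X, [/\ open U, U x &
  exists sec : X -> Xh, (forall x', U x' -> pi (sec x') = x') /\
    (forall x', U x' -> {for x', continuous sec})].
Proof.
case: Hbun => [[_ surj] [_ [T0 [_ Tpi]]] [fib _] loc].
have [U [oU Ux [phi [phiA phiT _ phiO]]]] := loc x.
exists U; split => //.
pose S y := U (pi y) /\ phi y = 0.
have S_ex x' : U x' -> exists y, pi y = x' /\ S y.
  have [y <-] := surj x'; move=> Uy.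
  have AN_phiy : A (- phi y) := AN _ (phiA y Uy).
  exists (T (- phi y) y); rewrite /S !Tpi //.
  by rewrite phiT // subrr.
have S_inj y z : S y -> S z -> pi y = pi z -> y = z.
  rewrite /S => -[Uy phiy] [_ phiz] /fib[r [Ar ez]]; subst z.
  by move: phiz; rewrite phiT // phiy add0r => ->; rewrite T0.
have [y0 _] := surj x.
pose sec x' :=
  if pselect (exists y, pi y = x' /\ S y) is left h then sval (cid h) else y0.
have secP x' : U x' -> pi (sec x') = x' /\ S (sec x').
  by move=> /S_ex ex; rewrite /sec; case: pselect => // h; case: (cid h).
exists sec; split=> [x' /secP[]//|x' Ux' V /=].
rewrite nbhsE => -[W [oW Wsec] WV].
have : nbhs x' (pi @` (W `&` S)).
  apply: open_nbhs_nbhs; split; first exact: phiO A0 _ oW.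
  by exists (sec x'); case: (secP _ Ux').
apply: filterS => _ [z [Wz Sz] <-]; apply: WV.
by have [pz Sz'] := secP _ Sz.1; rewrite (S_inj _ _ Sz' Sz pz).
Qed.

Section PathInvariant.
Context {V : Type} {f : Xh -> V}.
Hypothesis f_path : forall s : Delta1 R -> Xh, continuous s ->
  f (s (d1one R)) = f (s (d1zero R)).
Hypothesis f_fibre : forall y z, pi y = pi z -> f y = f z.

(* Near [t0] the path stays in the domain of a local section, through which
   the segment from [t0] to [t] lifts to a path in [Xh]. *)
Lemma locally_constant_along_path {lift : X -> Xh} {p : R -> X} :
  (forall x, pi (lift x) = x) -> continuous p ->
  forall t0, \forall t \near t0, f (lift (p t)) = f (lift (p t0)).
Proof.
move=> liftK cp t0.
have [U [oU Up0 [sec [secK csec]]]] := local_section (p t0).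
have /nbhs_ballP[e e0 ballU] : nbhs t0 (p @^-1` U).
  by apply: cp; exact: open_nbhs_nbhs.
apply/nbhs_ballP; exists e => // t t0t.
pose seg (u : Delta1 R) := t0 + set_val u * (t - t0).
have segU u : U (p (seg u)).
  apply: ballU; move: t0t; rewrite /ball /= /seg opprD addrA subrr sub0r normrN normrM.
  have /set_mem : set_val u \in @D1set R by case: u.
  rewrite /D1set /= in_itv /= => /andP[u0 u1].
  by rewrite (ger0_norm u0) distrC => /(le_lt_trans (ler_piMl _ u1)); apply.
have cseg : continuous seg.
  move=> u; apply: (@continuous_comp _ _ _ (@set_val _ (@D1set R))
    (fun r : R => t0 + r * (t - t0))); first exact: initial_continuous.
  by apply: cvgD; [exact: cvg_cst | apply: cvgMr_tmp; exact: cvg_id].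
have seg0 : seg (d1zero R) = t0 by rewrite /seg /= mul0r addr0.
have seg1 : seg (d1one R) = t by rewrite /seg /= mul1r addrC subrK.
have lift_sec t' : U (p t') -> f (lift (p t')) = f (sec (p t')).
  by move=> Ut'; apply: f_fibre; rewrite liftK secK.
rewrite !lift_sec //; last exact: ballU.
have /= := f_path (sec \o p \o seg); rewrite seg0 seg1; apply=> u.
apply: continuous_comp; first exact: cseg.
by apply: continuous_comp; [exact: cp | exact: csec (segU u)].
Qed.

Lemma path_fibre_invariant_const : path_connected R X -> forall y z, f y = f z.
Proof.
move=> HX y z; have [[_ surj] _ _ _] := Hbun.
pose lift x := sval (cid (surj x)).
have liftK x : pi (lift x) = x by rewrite /lift; case: cid.
have [s [cs s0 s1]] := HX (pi y) (pi z).
have cp : continuous (s \o @toD1 R).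
  by move=> t; apply: continuous_comp; [exact: continuous_toD1 | exact: cs].
have connR : connected [set: R] by apply/connected_intervalP.
have := locally_constant_connected connR (locally_constant_along_path liftK cp) 0 1.
rewrite /= toD1_0 toD1_1 s0 s1.
by rewrite (f_fibre _ _ (esym (liftK (pi y)))) (f_fibre _ _ (esym (liftK (pi z)))).
Qed.

End PathInvariant.

Section Cohomologous.
Context {alpha1 alpha2 : cochain1 R X} {theta1 theta2 : Xh -> R} {beta : X -> R}.
Hypothesis Ht1 : theta_for A pi T alpha1 theta1.
Hypothesis Ht2 : theta_for A pi T alpha2 theta2.
Hypothesis Hbeta : cochain1_eq (fun s => alpha1 s - alpha2 s) (d0 beta).
Hypothesis HX : path_connected R X.

Lemma rho_cohomologous (k : Xh -> Xh) y :
  rho theta1 k y = rho theta2 k y + (beta (pi (k y)) - beta (pi y)).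
Proof.
have [[cpi _] [_ [_ [_ Tpi]]] [fib _] _] := Hbun.
pose f y := theta1 y - theta2 y - beta (pi y).
suff: f (k y) = f y by rewrite /rho /f; lra.
apply: (path_fibre_invariant_const (f := f) _ _ HX) => [s cs | y' z /fib[r [Ar ->]]].
- have cps : continuous (pi \o s).
    by move=> u; apply: continuous_comp; [exact: cs | exact: cpi].
  by move: (Ht1.1 s cs) (Ht2.1 s cs) (Hbeta _ cps); rewrite /d0 /f /=; lra.
- by rewrite /f Ht1.2 // Ht2.2 // Tpi //; lra.
Qed.

End Cohomologous.
End PrincipalBundle.

Theorem proposition2p11 (R : realType) (A : set R)
  (HA : A = range (fun z : int => z%:~R) \/ A = setT)
  (X : ptopologicalType) (Xh : topologicalType) (pi : Xh -> X) (T : R -> Xh -> Xh)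
  (Hbun : principal_bundle A pi T) (HX : path_connected R X)
  (alpha1 alpha2 : cochain1 R X)
  (Hc1 : is_cocycle1 alpha1) (Hc2 : is_cocycle1 alpha2)
  (theta1 theta2 : Xh -> R)
  (Ht1 : theta_for A pi T alpha1 theta1) (Ht2 : theta_for A pi T alpha2 theta2)
  (beta : X -> R)
  (Hbeta : cochain1_eq (fun s => alpha1 s - alpha2 s) (d0 beta))
  (g : X -> X) (Hg : homeomorphism g)
  (Hga : exists c : X -> R,
     cochain1_eq (fun s => alpha1 (g \o s) - alpha1 s) (d0 c))
  (gh : Xh -> Xh) (Hgh : homeomorphism gh)
  (Hcov : forall y, pi (gh y) = g (pi y)) :
  (forall (x : X) (xh : Xh), pi xh = x ->
     cvg ((fun n : nat => rho theta1 (iter n gh) xh / n%:R) @ \oo) ->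
     cvg ((fun n : nat => rho theta2 (iter n gh) xh / n%:R) @ \oo) ->
     (exists M : R, forall i : nat, `|beta (iter i g x)| <= M) ->
     lim ((fun n : nat => rho theta1 (iter n gh) xh / n%:R) @ \oo) =
     lim ((fun n : nat => rho theta2 (iter n gh) xh / n%:R) @ \oo)) /\
  (forall (mu : probability (borel X) R) (s : X -> Xh),
     (forall x, pi (s x) = x) ->
     (forall B : set (borel X), measurable B -> mu (g @^-1` B) = mu B) ->
     mu.-integrable setT (fun x => (rho theta1 gh (s x))%:E) ->
     mu.-integrable setT (fun x => (rho theta2 gh (s x))%:E) ->
     (\int[mu]_x ((beta (g x) - beta x)%:E) = 0)%E ->
     (\int[mu]_x ((rho theta1 gh (s x))%:E) =
      \int[mu]_x ((rho theta2 gh (s x))%:E))%E).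
Proof.
have rho_sub := rho_cohomologous HA Hbun Ht1 Ht2 Hbeta HX.
have iter_pi n y : pi (iter n gh y) = iter n g (pi y).
  by elim: n => //= n IHn; rewrite Hcov IHn.
split=> [x xh <- _ cvg2 [M beta_bd] | mu s s_sec _ int1 int2 int0].
- have beta_orbit0 :
      (fun n => (beta (iter n g (pi xh)) - beta (pi xh)) / n%:R) @ \oo --> 0.
    apply: bounded_divn_cvg0; exists (M + M) => n.
    by apply: le_trans (ler_normB _ _) _; exact: lerD (beta_bd n) (beta_bd 0%N).
  under eq_fun do rewrite rho_sub iter_pi mulrDl.
  by rewrite limD // ?(cvg_lim _ beta_orbit0) ?addr0 //; exact: cvgP beta_orbit0.
- have rho_sum x : ((rho theta1 gh (s x))%:E =
      (rho theta2 gh (s x))%:E + (beta (g x) - beta x)%:E)%E.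
    by rewrite rho_sub Hcov s_sec EFinD.
  have int_beta : mu.-integrable setT (fun x => (beta (g x) - beta x)%:E).
    apply: eq_integrable (integrableB _ int1 int2) => // x _ /=.
    by rewrite rho_sub Hcov s_sec -EFinB addrAC subrr add0r.
  by under eq_integral do rewrite rho_sum; rewrite integralD // int0 adde0.
Qed.
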